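(* For all homogeneous $\varphi_1,\varphi_2,\psi\in CC^\bullet(\mathscr A)[1]$, as operators on $CC_\bullet(\mathscr A)[1]$: $\rho_{\varphi_1\circ\varphi_2,\psi}-\rho_{\varphi_1,[\varphi_2,\psi]}+(-1)^{|\varphi_1|'|\varphi_2|'}[\mathcal L_{\varphi_2},\rho_{\varphi_1,\psi}]=T_{\varphi_1,\varphi_2,\psi}+(-1)^{|\varphi_1|'|\varphi_2|'}T_{\varphi_2,\varphi_1,\psi}$, where $T_{\alpha,\beta,\psi}:=\mathcal L^{0}_{\alpha}\circ\rho_{\beta,\psi}$ and $\mathcal L^{0}_\alpha(\mathbb X):=\sum_{0\le i\le j\le k}(-1)^{(|x_0|'+\cdots+|x_j|')(|x_{j+1}|'+\cdots+|x_k|')}\alpha(x_{j+1},\dots,x_k,x_0,\dots,x_i)\otimes x_{i+1}\otimes\cdots\otimes x_j$ is the second summand of $\mathcal L_\alpha$ (i.e. $T_{\alpha,\beta,\psi}$ is the operation $\{\alpha\{\beta\{\psi,\mathit{in}\}\}\}$: apply $\rho_{\beta,\psi}$, then feed the resulting first tensor factor together with neighbouring inputs cyclically into $\alpha$).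
   Context: Same notation as for Hochschild operations: $\mathscr A$ with graded $R$-modules $\mathrm{Hom}_{\mathscr A}(X,Y)$; $CC^\bullet(\mathscr A)[1]$ and $CC_\bullet(\mathscr A)[1]$ as usual, chains $\mathbb X=x_0\otimes\cdots\otimes x_k$ with $x_i$ in shifted Homs of shifted degree $|x_i|'$, and $|\varphi|'$ the degree of a cochain in $CC^\bullet(\mathscr A)[1]$. $(\varphi\circ\psi)(x_1,\dots,x_k)=\sum_{i\le j}(-1)^{|\psi|'(|x_1|'+\cdots+|x_i|')}\varphi(x_1,\dots,x_i,\psi(x_{i+1},\dots,x_j),\dots,x_k)$; $[\varphi,\psi]=\varphi\circ\psi-(-1)^{|\varphi|'|\psi|'}\psi\circ\varphi$; $\mathcal L_\varphi(\mathbb X)=\sum_{i\le j}(-1)^{|\varphi|'(|x_0|'+\cdots+|x_i|')}x_0\otimes\cdots\otimes x_i\otimes\varphi(x_{i+1},\dots,x_j)\otimes\cdots\otimes x_k+\mathcal L^0_\varphi(\mathbb X)$; $\rho_{\varphi,\psi}(\mathbb X)=\sum_{i\le j\le s\le t}(-1)^{|\psi|'(|x_{j+1}|'+\cdots+|x_s|')+(|x_0|'+\cdots+|x_j|')(|x_{j+1}|'+\cdots+|x_k|')}\varphi(x_{j+1},\dots,x_s,\psi(x_{s+1},\dots,x_t),x_{t+1},\dots,x_k,x_0,\dots,x_i)\otimes x_{i+1}\otimes\cdots\otimes x_j$. Graded commutators of operators use degrees $|\mathcal L_\varphi|=|\varphi|'$ and $|\rho_{\varphi,\psi}|=|\varphi|'+|\psi|'$.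 No reducedness assumption on the cochains is needed. *)

From HB Require Import structures.
From mathcomp Require Import all_boot all_order all_algebra.
Set Implicit Arguments. Unset Strict Implicit. Unset Printing Implicit Defensive.
Import Order.TTheory GRing.Theory Num.Theory.
Local Open Scope ring_scope.

(* Model of a graded R-linear category A:                     *)
(*   H X Y n    : the degree-n component of the SHIFTED module               *)
(*                Hom_A(X,Y)[1], so elements of H X Y n have |x|' = n.       *)
(* A homogeneous element of a shifted Hom is an [entry].                     *)
Section Hochschild.
Variables (R : comNzRingType) (Ob : Type) (H : Ob -> Ob -> int -> lmodType R).

Record entry := Entry { e_src : Ob; e_tgt : Ob; e_deg : int;
                        e_val : H e_src e_tgt e_deg }.

Definition degs (s : seq entry) : int := \sum_(e <- s) e_deg e.

Definition endobj (A : Ob) (s : seq entry) : Ob := last A (map e_tgt s).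

Definition sgnz (V : zmodType) (e : int) (v : V) : V :=
  if odd `|e|%N then - v else v.

Fixpoint composable (s : seq entry) : Prop :=
  match s with
  | x :: ((y :: _) as t) => e_tgt x = e_src y /\ composable t
  | _ => True
  end.

(* x_0 (x) ... (x) x_k is a (homogeneous pure) Hochschild chain:
   x_0 : X_k -> X_0,  x_i : X_(i-1) -> X_i. *)
Definition cyclic_chain (s : seq entry) : Prop :=
  match s with
  | [::] => False
  | x0 :: _ => composable (rcons s x0)
  end.

(* A Hochschild cochain, restricted to homogeneous inputs:
   [phi X Y n xs] is the degree-n component (in H X Y n) of
   phi(x_1,...,x_k) for a path xs = x_1..x_k from X to Y
   (for k = 0, X = Y and this is the component of the value phi_X()). *)
Definition cochain := forall (X Y : Ob) (n : int), seq entry -> H X Y n.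

Definition is_cochain (d : int) (phi : cochain) : Prop :=
  (forall X Y n xs, n != d + degs xs -> phi X Y n xs = 0) /\
  (forall X Y n pre post A B m (a : R) (u v : H A B m),
      phi X Y n (pre ++ Entry (a *: u + v) :: post)
      = a *: phi X Y n (pre ++ Entry u :: post)
        + phi X Y n (pre ++ Entry v :: post)).

(* A family of multilinear maps on (homogeneous pure) tensor words.
   Operators on CC_.(A)[1] are compared through all such F, i.e. through
   the universal property of the tensor product. *)
Definition multilinear (W : lmodType R) (F : seq entry -> W) : Prop :=
  forall pre post A B m (a : R) (u v : H A B m),
    F (pre ++ Entry (a *: u + v) :: post)
    = a *: F (pre ++ Entry u :: post) + F (pre ++ Entry v :: post).

Definition ins (d : int) (phi : cochain) (A : Ob) (mid : seq entry) : entry :=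
  let B := endobj A mid in
  let m := d + degs mid in
  @Entry A B m (phi A B m mid).

Definition gcomp (dphi dpsi : int) (phi psi : cochain) : cochain :=
  fun X Y n xs =>
  \sum_(0 <= i < (size xs).+1) \sum_(i <= j < (size xs).+1)
    sgnz (dpsi * degs (take i xs))
      (phi X Y n (take i xs
                  ++ ins dpsi psi (endobj X (take i xs)) (drop i (take j xs))
                  :: drop j xs)).

Definition gbracket (dphi dpsi : int) (phi psi : cochain) : cochain :=
  fun X Y n xs =>
  gcomp dphi dpsi phi psi X Y n xs
  - sgnz (dphi * dpsi) (gcomp dpsi dphi psi phi X Y n xs).

(* Operators on chains, in transposed form: for an operator P on CC_.[1],    *)
(* [Pt F] is the map xs |-> F (P xs) (F extended linearly).  Composition     *)
(* reverses: (P o Q)t F = Qt (Pt F).                                        *)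
Section Ops.
Variable W : lmodType R.
Implicit Types (F : seq entry -> W) (xs : seq entry).

(* object X_j = tgt x_j reached after the nonempty prefix s of the chain
   x0 :: _ (the default e_src x0 is never used when s is nonempty) *)
Definition endc (x0 : entry) (s : seq entry) : Ob := endobj (e_src x0) s.

(* first summand of L_phi :
   sum_{i<=j} (-1)^{|phi|'(|x_0|'+..+|x_i|')}
     x_0 (x) .. (x) x_i (x) phi(x_{i+1},..,x_j) (x) x_{j+1} (x) .. (x) x_k *)
Definition L1t (d : int) (phi : cochain) F xs : W :=
  if xs is x0 :: _ then
  \sum_(1 <= i < (size xs).+1) \sum_(i <= j < (size xs).+1)
    sgnz (d * degs (take i xs))
      (F (take i xs
          ++ ins d phi (endc x0 (take i xs)) (drop i (take j xs))
          :: drop j xs))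
  else 0.

Definition L0t (d : int) (phi : cochain) F xs : W :=
  if xs is x0 :: _ then
  \sum_(1 <= j < (size xs).+1) \sum_(1 <= i < j.+1)
    sgnz (degs (take j xs) * degs (drop j xs))
      (F (ins d phi (endc x0 (take j xs)) (drop j xs ++ take i xs)
          :: drop i (take j xs)))
  else 0.

Definition Lt (d : int) (phi : cochain) F xs : W := L1t d phi F xs + L0t d phi F xs.

(* rho_{phi,psi} :
   sum_{i<=j<=s<=t} (-1)^{|psi|'(|x_{j+1}|'+..+|x_s|')
                         + (|x_0|'+..+|x_j|')(|x_{j+1}|'+..+|x_k|')}
     phi(x_{j+1},..,x_s, psi(x_{s+1},..,x_t), x_{t+1},..,x_k, x_0,..,x_i)
       (x) x_{i+1} (x) .. (x) x_j
   (indices shifted by one below: i,j,s,t range over 1..k+1) *)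
Definition rhot (dphi dpsi : int) (phi psi : cochain) F xs : W :=
  if xs is x0 :: _ then
  \sum_(1 <= i < (size xs).+1) \sum_(i <= j < (size xs).+1)
  \sum_(j <= s < (size xs).+1) \sum_(s <= t < (size xs).+1)
    let A := endc x0 (take j xs) in
    let pre := drop j (take s xs) in
    sgnz (dpsi * degs pre + degs (take j xs) * degs (drop j xs))
      (F (ins dphi phi A
            (pre ++ ins dpsi psi (endobj A pre) (drop s (take t xs))
                 :: (drop t xs ++ take i xs))
          :: drop i (take j xs)))
  else 0.

Definition Tt (dalpha dbeta dpsi : int) (alpha beta psi : cochain) F : seq entry -> W :=
  rhot dbeta dpsi beta psi (L0t dalpha alpha F).

Definition commLrhot (dphi dchi dpsi : int) (phi chi psi : cochain) F xs : W :=
  rhot dchi dpsi chi psi (Lt dphi phi F) xs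
  - sgnz (dphi * (dchi + dpsi)) (Lt dphi phi (rhot dchi dpsi chi psi F) xs).
End Ops.
End Hochschild.

From HB Require Import structures.
From mathcomp Require Import all_boot all_order all_algebra.
From mathcomp Require Import zify.
From Stdlib Require Import Setoid Morphisms.
Import GRing.Theory.
Local Open Scope ring_scope.
Set Implicit Arguments. Unset Strict Implicit. Unset Printing Implicit Defensive.

(* Every operator involved is a signed sum over the ways of cutting the tail y
   into consecutive blocks.  We write  dsum f l  for the sum of  f a b  over all
   splittings  l = a ++ b  and develop a small calculus for it (cons, splitting
   around a marked entry, associativity, exchange of sums).  Then:
   1. rho, L^0, L^1 and the Gerstenhaber composition are put in dsum normal form;
   2. multilinearity of F and of phi1 lets an inner cochain phi1 o phi2 or
      [phi2, psi] be expanded into sums of nested insertions;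
   3. each of the terms of the identity becomes a combination of eight
      seven-fold dsums, one per relative position of phi2, psi and x0 inside the
      output (phi2_then_psi, ..., phi2_outside);
   4. these combinations cancel in the abelian group W, leaving exactly the two
      T terms. *)

Definition splits (T : Type) (l : seq T) : seq (seq T * seq T) :=
  [seq (take i l, drop i l) | i <- iota 0 (size l).+1].

Definition dsum (T : Type) (V : zmodType) (f : seq T -> seq T -> V) (l : seq T) : V :=
  \sum_(p <- splits l) f p.1 p.2.

Section Splittings.
Variables (T : Type) (V : zmodType).
Implicit Types (f g : seq T -> seq T -> V) (l : seq T).

Lemma eq_dsum f g l : (forall a b, f a b = g a b) -> dsum f l = dsum g l.
Proof. by move=> e; apply: eq_bigr => p _; rewrite e. Qed.

Lemma eq_dsum_in f g l : (forall a b, l = a ++ b -> f a b = g a b) -> dsum f l = dsum g l.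
Proof.
move=> e; rewrite /dsum /splits !big_map; apply: eq_bigr => i _; apply: e.
by rewrite cat_take_drop.
Qed.

Lemma dsum_nil f : dsum f [::] = f [::] [::].
Proof. by rewrite /dsum /splits /= big_cons big_nil addr0. Qed.

Lemma splits_cons x l :
  splits (x :: l) = ([::], x :: l) :: [seq (x :: p.1, p.2) | p <- splits l].
Proof.
rewrite /splits.
change (iota 0 (size (x :: l)).+1) with (0%N :: iota 1 (size l).+1).
rewrite map_cons; congr (_ :: _).
have := iotaDl 1 0 (size l).+1; rewrite addn0 => ->.
by rewrite -!map_comp; apply: eq_map.
Qed.

Lemma dsum_cons f x l : dsum f (x :: l) = f [::] (x :: l) + dsum (fun a b => f (x :: a) b) l.
Proof. by rewrite /dsum splits_cons big_cons big_map. Qed.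

Lemma dsumD f g l : dsum (fun a b => f a b + g a b) l = dsum f l + dsum g l.
Proof. by rewrite /dsum big_split. Qed.

Lemma dsumN f l : dsum (fun a b => - f a b) l = - dsum f l.
Proof. by rewrite /dsum sumrN. Qed.

(* A splitting of a ++ e :: c cuts either inside a or inside c. *)
Lemma dsum_cat_entry f a e c :
  dsum f (a ++ e :: c) = dsum (fun a1 a2 => f a1 (a2 ++ e :: c)) a
                        + dsum (fun c1 c2 => f (a ++ e :: c1) c2) c.
Proof.
elim: a f => [|x a IH] f; first by rewrite dsum_nil dsum_cons.
by rewrite cat_cons dsum_cons IH dsum_cons addrA.
Qed.

Lemma dsum_assoc (g : seq T -> seq T -> seq T -> V) l :
  dsum (fun a r => dsum (fun b c => g a b c) r) l
  = dsum (fun ab c => dsum (fun a b => g a b c) ab) l.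
Proof.
elim: l g => [|x l IH] g; first by rewrite !dsum_nil.
rewrite !dsum_cons dsum_nil (IH (fun a b c => g (x :: a) b c)) -addrA; congr (_ + _).
by rewrite -dsumD; apply: eq_dsum => ab c; rewrite dsum_cons.
Qed.

Lemma dsum_cat_eq (h : seq T -> seq T -> seq T -> V) l :
  dsum (fun a b => h (a ++ b) a b) l = dsum (fun a b => h l a b) l.
Proof. by apply: eq_dsum_in => a b ->. Qed.

Lemma dsum_regroup (g : seq T -> seq T -> seq T -> seq T -> V) l :
  dsum (fun ab c => dsum (fun a b => g ab a b c) ab) l
  = dsum (fun a r => dsum (fun b c => g (a ++ b) a b c) r) l.
Proof.
rewrite (dsum_assoc (fun a b c => g (a ++ b) a b c)); apply: eq_dsum => ab c.
by rewrite -(dsum_cat_eq (fun ab' a b => g ab' a b c)).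
Qed.

Lemma dsum_exch (U : Type) (h : seq T -> seq T -> seq U -> seq U -> V) l (m : seq U) :
  dsum (fun a b => dsum (fun c d => h a b c d) m) l
  = dsum (fun c d => dsum (fun a b => h a b c d) l) m.
Proof. by rewrite /dsum exchange_big. Qed.

Lemma big_nat_dsum l (G : nat -> V) f :
  (forall i, (i <= size l)%N -> G i = f (take i l) (drop i l)) ->
  \sum_(0 <= i < (size l).+1) G i = dsum f l.
Proof.
move=> e; rewrite /dsum /splits big_map /index_iota subn0 big_seq [RHS]big_seq.
by apply: eq_bigr => i; rewrite mem_iota add0n ltnS => /andP[_ hi]; exact: e.
Qed.

Lemma big_nat_shift m n (G : nat -> V) : (m <= n.+1)%N ->
  \sum_(m <= j < n.+1) G j = \sum_(0 <= j < n.+1 - m) G (m + j).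
Proof.
by move=> h; rewrite -{1}(add0n m) big_addn; apply: eq_bigr => j _; rewrite addnC.
Qed.

Lemma big_nat_triangle m n (G : nat -> nat -> V) :
  \sum_(m <= j < n) \sum_(m <= i < j.+1) G i j = \sum_(m <= i < n) \sum_(i <= j < n) G i j.
Proof.
elim: n => [|n IH]; first by rewrite !big_geq.
case: (leqP m n) => hmn; last by rewrite !big_geq.
rewrite big_nat_recr //= IH [in RHS]big_nat_recr //=.
rewrite [in RHS](eq_big_nat _ _ (F2 := fun i => \sum_(i <= j < n) G i j + G i n)); last first.
  by move=> i /andP[_ hi]; rewrite big_nat_recr // ltnW.
by rewrite big_split /= big_nat1 big_nat_recr //= addrA.
Qed.
End Splittings.

(* dsum is a morphism for pointwise equality, so setoid_rewrite can work under it. *)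
#[export] Instance dsum_proper (T : Type) (V : zmodType) :
  Proper (pointwise_relation _ (pointwise_relation _ eq) ==> eq ==> eq) (@dsum T V).
Proof. by move=> f g e l _ <-; exact: eq_dsum. Qed.

Section Signs.
Variable V : zmodType.
Implicit Types (v w : V) (e : int).

Lemma sgnzD e v w : sgnz e (v + w) = sgnz e v + sgnz e w.
Proof. by rewrite /sgnz; case: ifP => //; rewrite opprD. Qed.

Lemma sgnzN e v : sgnz e (- v) = - sgnz e v.
Proof. by rewrite /sgnz; case: ifP. Qed.

Lemma sgnz0 e : sgnz e (0 : V) = 0.
Proof. by rewrite /sgnz; case: ifP => //; rewrite oppr0. Qed.

Lemma sgnz_sgnz e1 e2 v : sgnz e1 (sgnz e2 v) = sgnz (e1 + e2) v.
Proof.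
rewrite /sgnz; case h1: (odd (absz e1)); case h2: (odd (absz e2)).
- have ->: odd (absz (e1 + e2)) = false by lia.
  by rewrite opprK.
- by have ->: odd (absz (e1 + e2)) = true by lia.
- by have ->: odd (absz (e1 + e2)) = true by lia.
- by have ->: odd (absz (e1 + e2)) = false by lia.
Qed.

Lemma sgnz_parity e1 e2 v : odd (absz (e1 - e2)) = false -> sgnz e1 v = sgnz e2 v.
Proof.
by move=> h; rewrite /sgnz; case h1: (odd (absz e1)); case h2: (odd (absz e2)) => //; lia.
Qed.

Lemma sgnz_dsum (T : Type) e (f : seq T -> seq T -> V) l :
  sgnz e (dsum f l) = dsum (fun a b => sgnz e (f a b)) l.
Proof.
rewrite /dsum; elim: (splits l) => [|p s IH]; first by rewrite !big_nil sgnz0.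
by rewrite !big_cons sgnzD IH.
Qed.
End Signs.

Lemma drop_take_add (T : Type) m k (l : seq T) : drop m (take (m + k) l) = take k (drop m l).
Proof. by rewrite take_drop addnC. Qed.
Lemma drop_add (T : Type) m k (l : seq T) : drop (m + k) l = drop k (drop m l).
Proof. by rewrite drop_drop addnC. Qed.
Lemma take1_cons (T : Type) (x : T) l : take 1 (x :: l) = [:: x].
Proof. by rewrite /= take0. Qed.
Lemma drop1_cons (T : Type) (x : T) l : drop 1 (x :: l) = l.
Proof. by rewrite /= drop0. Qed.

Section LinearMaps.
Variables (R : comNzRingType) (U V : lmodType R).
Definition lin_map (g : U -> V) := forall (a : R) u v, g (a *: u + v) = a *: g u + g v.
Variables (g : U -> V) (hg : lin_map g).

Lemma lin0 : g 0 = 0.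
Proof.
have := hg 1 0 0; rewrite !scale1r !addr0 => h.
by apply: (@addrI _ (g 0)); rewrite addr0 -h.
Qed.
Lemma linD u v : g (u + v) = g u + g v.
Proof. by have := hg 1 u v; rewrite !scale1r. Qed.
Lemma linN u : g (- u) = - g u.
Proof. by rewrite -scaleN1r -(addr0 (_ *: u)) hg lin0 addr0 scaleN1r. Qed.
Lemma linB u v : g (u - v) = g u - g v.
Proof. by rewrite linD linN. Qed.
Lemma linS e u : g (sgnz e u) = sgnz e (g u).
Proof. by rewrite /sgnz; case: ifP => // _; rewrite linN. Qed.
Lemma lin_dsum (T : Type) (f : seq T -> seq T -> U) l :
  g (dsum f l) = dsum (fun a b => g (f a b)) l.
Proof.
rewrite /dsum; elim: (splits l) => [|p s IH]; first by rewrite !big_nil lin0.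
by rewrite !big_cons linD IH.
Qed.
End LinearMaps.

Section Entries.
Variables (R : comNzRingType) (Ob : Type) (H : Ob -> Ob -> int -> lmodType R).
Local Notation entry := (entry H).
Implicit Types (l s : seq entry).

Lemma degs_cat l s : degs (l ++ s) = degs l + degs s.
Proof. by rewrite /degs big_cat. Qed.
Lemma degs_cons x l : degs (x :: l) = e_deg x + degs l.
Proof. by rewrite /degs big_cons. Qed.
Lemma degs_nil : degs ([::] : seq entry) = 0.
Proof. by rewrite /degs big_nil. Qed.
Lemma endobj_cat A l s : endobj A (l ++ s) = endobj (endobj A l) s.
Proof. by rewrite /endobj map_cat last_cat. Qed.
Lemma endobj_cons A x l : endobj A (x :: l) = endobj (e_tgt x) l.
Proof. by []. Qed.

Lemma e_src_ins d (phi : cochain H) A mid : e_src (ins d phi A mid) = A.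
Proof. by []. Qed.
Lemma e_tgt_ins d (phi : cochain H) A mid : e_tgt (ins d phi A mid) = endobj A mid.
Proof. by []. Qed.
Lemma e_deg_ins d (phi : cochain H) A mid : e_deg (ins d phi A mid) = d + degs mid.
Proof. by []. Qed.

Lemma ins_cast d (phi : cochain H) A Y n mid :
  Y = endobj A mid -> n = d + degs mid -> @Entry _ _ H A Y n (phi A Y n mid) = ins d phi A mid.
Proof. by move=> -> ->. Qed.

Lemma endobj_repl A (pre : seq entry) (x x' : entry) post :
  e_tgt x = e_tgt x' -> endobj A (pre ++ x :: post) = endobj A (pre ++ x' :: post).
Proof. by move=> e; rewrite !endobj_cat !endobj_cons e. Qed.
Lemma degs_repl pre (x x' : entry) post :
  e_deg x = e_deg x' -> degs (pre ++ x :: post) = degs (pre ++ x' :: post).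
Proof. by move=> e; rewrite !degs_cat !degs_cons e. Qed.

Section NormalForms.
Variable W : lmodType R.
Implicit Types (F : seq entry -> W).

Lemma rhot_dsum dphi dpsi (phi psi : cochain H) F x0 y :
 rhot dphi dpsi phi psi F (x0 :: y) =
 dsum (fun a r1 => dsum (fun b r2 => dsum (fun c r3 => dsum (fun u v =>
   sgnz (dpsi * degs c + degs (x0 :: a ++ b) * degs (c ++ u ++ v))
     (F (ins dphi phi (endobj (e_src x0) (x0 :: a ++ b))
          (c ++ ins dpsi psi (endobj (endobj (e_src x0) (x0 :: a ++ b)) c) u
             :: (v ++ x0 :: a)) :: b))) r3) r2) r1) y.
Proof.
rewrite /rhot [size _]/= big_nat_shift // subSS subn0; apply: big_nat_dsum => i hi.
rewrite big_nat_shift; last by lia.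
rewrite (_ : ((size y).+2 - (1 + i))%N = (size (drop i y)).+1); last by rewrite size_drop; lia.
apply: big_nat_dsum => j hj.
rewrite big_nat_shift; last by rewrite size_drop in hj *; lia.
rewrite (_ : ((size y).+2 - (1 + i + j))%N = (size (drop j (drop i y))).+1); last first.
  by rewrite !size_drop in hj *; lia.
apply: big_nat_dsum => s hs.
rewrite big_nat_shift; last by rewrite !size_drop in hj hs *; lia.
rewrite (_ : ((size y).+2 - (1 + i + j + s))%N = (size (drop s (drop j (drop i y)))).+1).
  apply: big_nat_dsum => t ht.
  by rewrite /endc !drop_take_add !drop_add !takeD take1_cons drop1_cons !cat_take_drop.
by rewrite !size_drop in hj hs *; lia.
Qed.

Lemma L0t_dsum d (phi : cochain H) F x0 y :
 L0t d phi F (x0 :: y) =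
 dsum (fun a r => dsum (fun b c =>
   sgnz (degs (x0 :: a ++ b) * degs c)
     (F (ins d phi (endobj (e_src x0) (x0 :: a ++ b)) (c ++ x0 :: a) :: b))) r) y.
Proof.
rewrite /L0t big_nat_triangle [size _]/= big_nat_shift // subSS subn0.
apply: big_nat_dsum => i hi; rewrite big_nat_shift; last by lia.
rewrite (_ : ((size y).+2 - (1 + i))%N = (size (drop i y)).+1); last by rewrite size_drop; lia.
apply: big_nat_dsum => j hj.
by rewrite /endc !drop_take_add !drop_add !takeD take1_cons drop1_cons.
Qed.

Lemma L1t_dsum d (phi : cochain H) F x0 y :
 L1t d phi F (x0 :: y) =
 dsum (fun a r => dsum (fun b c =>
   sgnz (d * degs (x0 :: a))
     (F (x0 :: (a ++ ins d phi (endobj (e_src x0) (x0 :: a)) b :: c)))) r) y.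
Proof.
rewrite /L1t [size _]/= big_nat_shift // subSS subn0; apply: big_nat_dsum => i hi.
rewrite big_nat_shift; last by lia.
rewrite (_ : ((size y).+2 - (1 + i))%N = (size (drop i y)).+1); last by rewrite size_drop; lia.
apply: big_nat_dsum => j hj.
by rewrite /endc !drop_take_add !drop_add !takeD take1_cons drop1_cons.
Qed.

Lemma rhot_addF dphi dpsi (phi psi : cochain H) (F1 F2 : seq entry -> W) xs :
  rhot dphi dpsi phi psi (fun w => F1 w + F2 w) xs
  = rhot dphi dpsi phi psi F1 xs + rhot dphi dpsi phi psi F2 xs.
Proof.
case: xs => [|x0 y]; first by rewrite /rhot addr0.
rewrite !rhot_dsum -dsumD; apply: eq_dsum => a r1; rewrite -dsumD; apply: eq_dsum => b r2.
rewrite -dsumD; apply: eq_dsum => c r3; rewrite -dsumD; apply: eq_dsum => u v.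
by rewrite sgnzD.
Qed.
End NormalForms.

Lemma gcomp_dsum dphi dpsi (phi psi : cochain H) X Y n l :
  gcomp dphi dpsi phi psi X Y n l =
  dsum (fun p r => dsum (fun b q =>
     sgnz (dpsi * degs p) (phi X Y n (p ++ ins dpsi psi (endobj X p) b :: q))) r) l.
Proof.
rewrite /gcomp; apply: big_nat_dsum => i hi.
rewrite big_nat_shift; last by lia.
rewrite (_ : ((size l).+1 - i)%N = (size (drop i l)).+1); last by rewrite size_drop; lia.
by apply: big_nat_dsum => j hj; rewrite !drop_take_add !drop_add.
Qed.

Section SlotLinear.
Variable W : lmodType R.

Definition slot_linear (g : entry -> W) : Prop :=
  forall A B m, lin_map (fun v : H A B m => g (Entry v)).

Lemma multilinear_slot (F : seq entry -> W) (hF : multilinear F) pre post :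
  slot_linear (fun e => F (pre ++ e :: post)).
Proof. by move=> A B m a u v; exact: hF. Qed.

Lemma cochain_slot d (phi : cochain H) (h : is_cochain d phi) A c rest (g : entry -> W) :
  slot_linear g -> slot_linear (fun e => g (ins d phi A (c ++ e :: rest))).
Proof.
move=> hg B C m a u v /=.
set Y := endobj A (c ++ Entry u :: rest); set n := d + degs (c ++ Entry u :: rest).
have ins_val (w : H B C m) :
    ins d phi A (c ++ Entry w :: rest) = Entry (phi A Y n (c ++ Entry w :: rest)).
  by symmetry; apply: ins_cast; [apply: endobj_repl | congr (_ + _); apply: degs_repl].
by rewrite !ins_val h.2; exact: (hg A Y n).
Qed.

Lemma gcomp_slot_expand dphi dpsi (phi psi : cochain H) (g : entry -> W) A mid :
  slot_linear g ->
  g (ins (dphi + dpsi) (gcomp dphi dpsi phi psi) A mid) =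
  dsum (fun p r => dsum (fun b q => sgnz (dpsi * degs p)
     (g (ins dphi phi A (p ++ ins dpsi psi (endobj A p) b :: q)))) r) mid.
Proof.
move=> hg; set Y := endobj A mid; set n := dphi + dpsi + degs mid.
have lin_g := hg A Y n.
have -> : ins (dphi + dpsi) (gcomp dphi dpsi phi psi) A mid
          = Entry (gcomp dphi dpsi phi psi A Y n mid) by [].
rewrite gcomp_dsum; have := lin_dsum lin_g; rewrite /= => ->.
apply: eq_dsum_in => p r hm; have := lin_dsum lin_g; rewrite /= => ->.
apply: eq_dsum_in => b q hr; have := linS lin_g; rewrite /= => ->.
congr (sgnz _ (g _)); apply: ins_cast; rewrite /Y /n hm hr.
  by rewrite !endobj_cat endobj_cons e_tgt_ins.
by rewrite !degs_cat degs_cons e_deg_ins; lia.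
Qed.

Lemma gbracket_slot_split dphi dpsi (phi psi : cochain H) (g : entry -> W) B u :
  slot_linear g ->
  g (ins (dphi + dpsi) (gbracket dphi dpsi phi psi) B u) =
  g (ins (dphi + dpsi) (gcomp dphi dpsi phi psi) B u)
  - sgnz (dphi * dpsi) (g (ins (dpsi + dphi) (gcomp dpsi dphi psi phi) B u)).
Proof.
move=> hg; have lin_g := hg B (endobj B u) (dphi + dpsi + degs u).
have -> : ins (dphi + dpsi) (gbracket dphi dpsi phi psi) B u
          = Entry (gbracket dphi dpsi phi psi B (endobj B u) (dphi + dpsi + degs u) u) by [].
rewrite /gbracket; have := linB lin_g; rewrite /= => ->; have := linS lin_g; rewrite /= => ->.
by congr (_ - sgnz _ (g _)); apply: ins_cast => //; lia.
Qed.
End SlotLinear.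
End Entries.

Section InnerExpansions.
Variables (R : comNzRingType) (Ob : Type) (H : Ob -> Ob -> int -> lmodType R).
Local Notation entry := (entry H).
Variables (W : lmodType R) (F : seq entry -> W) (hF : multilinear F).

Lemma F_ins_gcomp dphi dpsi (phi psi : cochain H) A mid tail :
  F (ins (dphi + dpsi) (gcomp dphi dpsi phi psi) A mid :: tail) =
  dsum (fun p r => dsum (fun blk q => sgnz (dpsi * degs p)
     (F (ins dphi phi A (p ++ ins dpsi psi (endobj A p) blk :: q) :: tail))) r) mid.
Proof.
by have := gcomp_slot_expand dphi dpsi phi psi A mid (multilinear_slot hF [::] tail).
Qed.

Lemma F_ins_gbr d1 d2 dpsi (phi1 phi2 psi : cochain H) (h1 : is_cochain d1 phi1)
  A c B u rest tail :
  F (ins d1 phi1 A (c ++ ins (d2 + dpsi) (gbracket d2 dpsi phi2 psi) B u :: rest) :: tail) =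
  dsum (fun p r => dsum (fun blk q => sgnz (dpsi * degs p)
     (F (ins d1 phi1 A (c ++ ins d2 phi2 B (p ++ ins dpsi psi (endobj B p) blk :: q) :: rest)
          :: tail))) r) u
  - sgnz (d2 * dpsi) (dsum (fun p r => dsum (fun blk q => sgnz (d2 * degs p)
     (F (ins d1 phi1 A (c ++ ins dpsi psi B (p ++ ins d2 phi2 (endobj B p) blk :: q) :: rest)
          :: tail))) r) u).
Proof.
have hg := cochain_slot h1 A c rest (multilinear_slot hF [::] tail).
have := gbracket_slot_split d2 dpsi phi2 psi B u hg; rewrite /= => ->.
have := gcomp_slot_expand d2 dpsi phi2 psi B u hg; rewrite /= => ->.
by have := gcomp_slot_expand dpsi d2 psi phi2 B u hg; rewrite /= => ->.
Qed.
End InnerExpansions.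

(* Bookkeeping tactics for nested dsums.
   rewrite_deep L : rewrite with L everywhere, also under dsum binders;
   pull_out n     : move the dsum at depth n to the front (dsum_exch);
   at_depth n t   : run t under the first n dsum binders;
   regroup        : apply dsum_regroup at the head;
   dsum7_congr    : reduce an equation between seven-fold dsums to their summands;
   match_term     : close  sgnz e1 (F w1) = sgnz e2 (F w2)  by normalizing the
                    objects/lists of w1, w2 and checking e1 = e2 mod 2. *)
Ltac rewrite_deep L := repeat (setoid_rewrite L; cbv beta).
Ltac pull_out n := lazymatch n with
  | S O => rewrite dsum_exch; cbv beta
  | S ?m => (under eq_dsum => ? ? do pull_out m); rewrite dsum_exch; cbv beta
  end.
Ltac at_depth n tac := lazymatch n with
  | O => tac
  | S ?m => under eq_dsum => ? ? do (at_depth m tac)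
  end.
Ltac regroup := rewrite dsum_regroup; cbv beta.

Definition dsum7 (T : Type) (V : zmodType)
  (G : seq T -> seq T -> seq T -> seq T -> seq T -> seq T -> seq T -> V) (l : seq T) : V :=
  dsum (fun p1 r1 => dsum (fun p2 r2 => dsum (fun p3 r3 => dsum (fun p4 r4 =>
    dsum (fun p5 r5 => dsum (fun p6 p7 => G p1 p2 p3 p4 p5 p6 p7) r5) r4) r3) r2) r1) l.

Ltac split_level := apply: eq_dsum_in;
  let a := fresh "p" in let b := fresh "r" in let e := fresh "e" in
  intros a b e; rewrite ?e; clear e.
Ltac dsum7_congr := rewrite /dsum7; do 6 split_level.

Lemma sgnz_F_eq (R : comNzRingType) (Ob : Type) (H : Ob -> Ob -> int -> lmodType R)
  (W : lmodType R) (F : seq (entry H) -> W) w1 w2 E1 E2 :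
  w1 = w2 -> odd (absz (E1 - E2)) = false -> sgnz E1 (F w1) = sgnz E2 (F w2).
Proof. by move=> -> h; apply: sgnz_parity. Qed.

Ltac simpl_obj := repeat (rewrite ?endobj_cat ?endobj_cons ?e_tgt_ins ?e_src_ins).
Ltac simpl_degs := do 3 (rewrite ?degs_cat ?degs_cons ?e_deg_ins); rewrite ?degs_nil.
Ltac match_term := apply: sgnz_F_eq;
  [simpl_obj; do 4 (rewrite ?cat_cons -?catA); reflexivity | simpl_degs; lia].

(* The identity on a fixed chain x0 :: y.  Only the multilinearity of phi1 (in
   which the bracket [phi2, psi] is inserted) and of F is needed. *)
Section Main.
Variables (R : comNzRingType) (Ob : Type) (H : Ob -> Ob -> int -> lmodType R).
Variables (d1 d2 dpsi : int) (phi1 phi2 psi : cochain H).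
Hypothesis h1 : is_cochain d1 phi1.
Variables (W : lmodType R) (F : seq (entry H) -> W) (hF : multilinear F).
Variables (x0 : entry H) (y : seq (entry H)).
Local Notation ent := (entry H).

Definition obj_after (L : seq ent) : Ob := endobj (e_tgt x0) L.
Local Notation N1 := (ins d1 phi1).
Local Notation N2 := (ins d2 phi2).
Local Notation Np := (ins dpsi psi).

(* The eight configurations of phi2, psi and x0 in an output term; each is the
   signed summand of a seven-fold dsum over the blocks of y.
   phi2_then_psi: phi2 and then psi, disjoint, both inside the arguments of phi1. *)
Definition phi2_then_psi (a b c1 c2 c3 u v : seq ent) : W :=
  sgnz (dpsi * degs (c1 ++ c2 ++ c3) + degs (x0 :: a ++ b) * degs (c1 ++ c2 ++ c3 ++ u ++ v) + d2 * degs c1)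
   (F (N1 (obj_after (a ++ b)) (c1 ++ N2 (obj_after (a ++ b ++ c1)) c2
          :: c3 ++ Np (obj_after (a ++ b ++ c1 ++ c2 ++ c3)) u :: v ++ x0 :: a) :: b)).

Definition psi_then_phi2 (a b c u v1 v2 v3 : seq ent) : W :=
  sgnz (dpsi * degs c + degs (x0 :: a ++ b) * degs (c ++ u ++ v1 ++ v2 ++ v3)
        + d2 * (degs c + dpsi + degs u + degs v1))
   (F (N1 (obj_after (a ++ b)) (c ++ Np (obj_after (a ++ b ++ c)) u
          :: v1 ++ N2 (obj_after (a ++ b ++ c ++ u ++ v1)) v2 :: v3 ++ x0 :: a) :: b)).

Definition phi2_after_x0 (a1 a2 a3 b c u v : seq ent) : W :=
  sgnz (dpsi * degs c + degs (x0 :: a1 ++ a2 ++ a3 ++ b) * degs (c ++ u ++ v)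
        + d2 * (degs c + dpsi + degs u + degs v + e_deg x0 + degs a1))
   (F (N1 (obj_after (a1 ++ a2 ++ a3 ++ b)) (c ++ Np (obj_after (a1 ++ a2 ++ a3 ++ b ++ c)) u
          :: v ++ x0 :: a1 ++ N2 (obj_after a1) a2 :: a3) :: b)).

(* psi nested in phi2, nested in phi1; the arguments of phi2 avoid x0. *)
Definition psi_in_phi2 (a b c1 c2 u v1 v2 : seq ent) : W :=
  sgnz (dpsi * degs (c1 ++ c2) + degs (x0 :: a ++ b) * degs (c1 ++ c2 ++ u ++ v1 ++ v2) + d2 * degs c1)
   (F (N1 (obj_after (a ++ b)) (c1 ++ N2 (obj_after (a ++ b ++ c1))
          (c2 ++ Np (obj_after (a ++ b ++ c1 ++ c2)) u :: v1) :: v2 ++ x0 :: a) :: b)).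

(* psi nested in phi2, nested in phi1; the arguments of phi2 contain x0. *)
Definition psi_in_phi2_wrap (a1 a2 b c1 c2 u v : seq ent) : W :=
  sgnz (dpsi * degs (c1 ++ c2) + degs (x0 :: a1 ++ a2 ++ b) * degs (c1 ++ c2 ++ u ++ v) + d2 * degs c1)
   (F (N1 (obj_after (a1 ++ a2 ++ b)) (c1 ++ N2 (obj_after (a1 ++ a2 ++ b ++ c1))
          (c2 ++ Np (obj_after (a1 ++ a2 ++ b ++ c1 ++ c2)) u :: v ++ x0 :: a1) :: a2) :: b)).

Definition phi2_wrap_after_psi (a1 a2 b c u v1 v2 : seq ent) : W :=
  sgnz (dpsi * degs c + degs (x0 :: a1 ++ a2 ++ b) * degs (c ++ u ++ v1 ++ v2)
        + d2 * (degs c + dpsi + degs u + degs v1))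
   (F (N1 (obj_after (a1 ++ a2 ++ b)) (c ++ Np (obj_after (a1 ++ a2 ++ b ++ c)) u
          :: v1 ++ N2 (obj_after (a1 ++ a2 ++ b ++ c ++ u ++ v1)) (v2 ++ x0 :: a1) :: a2) :: b)).

Definition phi2_in_psi (a b c u1 u2 u3 v : seq ent) : W :=
  sgnz ((d2 + dpsi) * degs c + degs (x0 :: a ++ b) * degs (c ++ u1 ++ u2 ++ u3 ++ v)
        + d2 * dpsi + d2 * degs u1)
   (F (N1 (obj_after (a ++ b)) (c ++ Np (obj_after (a ++ b ++ c)) (u1 ++ N2 (obj_after (a ++ b ++ c ++ u1)) u2 :: u3)
          :: v ++ x0 :: a) :: b)).

(* psi inside phi1, and phi2 applied among the remaining tensor factors. *)
Definition phi2_outside (a b1 b2 b3 c u v : seq ent) : W :=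
  sgnz (d1 * d2 + dpsi * degs c + degs (x0 :: a ++ b1 ++ b2 ++ b3) * degs (c ++ u ++ v)
        + d2 * (d1 + degs c + dpsi + degs u + degs v + e_deg x0 + degs a + degs b1))
   (F (N1 (obj_after (a ++ b1 ++ b2 ++ b3)) (c ++ Np (obj_after (a ++ b1 ++ b2 ++ b3 ++ c)) u :: v ++ x0 :: a)
        :: b1 ++ N2 (obj_after (a ++ b1)) b2 :: b3)).

(* rho_{phi1 o phi2, psi}: phi2 may sit before, around, or after psi. *)
Lemma rho_comp_expand : rhot (d1 + d2) dpsi (gcomp d1 d2 phi1 phi2) psi F (x0 :: y) =
  dsum7 phi2_then_psi y + (dsum7 psi_in_phi2 y + dsum7 psi_in_phi2_wrap y) + (dsum7 psi_then_phi2 y + dsum7 phi2_wrap_after_psi y + dsum7 phi2_after_x0 y).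
Proof.
rewrite rhot_dsum.
rewrite_deep (F_ins_gcomp hF).
rewrite_deep sgnz_dsum. rewrite_deep sgnz_sgnz.
rewrite_deep dsum_cat_entry.
rewrite_deep dsumD.
congr (_ + (_ + _) + (_ + _ + _)).
- at_depth 3%N ltac:(idtac; pull_out 1%N). at_depth 2%N ltac:(idtac; regroup).
  at_depth 4%N ltac:(idtac; pull_out 1%N). at_depth 3%N ltac:(idtac; regroup).
  dsum7_congr; rewrite /phi2_then_psi /obj_after; match_term.
- at_depth 3%N ltac:(idtac; pull_out 1%N). at_depth 2%N ltac:(idtac; regroup).
  dsum7_congr; rewrite /psi_in_phi2 /obj_after; match_term.
- at_depth 3%N ltac:(idtac; pull_out 1%N). at_depth 2%N ltac:(idtac; regroup).
  at_depth 1%N ltac:(idtac; pull_out 4%N). regroup.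
  dsum7_congr; rewrite /psi_in_phi2_wrap /obj_after; match_term.
- dsum7_congr; rewrite /psi_then_phi2 /obj_after; match_term.
- at_depth 1%N ltac:(idtac; pull_out 4%N). regroup.
  dsum7_congr; rewrite /phi2_wrap_after_psi /obj_after; match_term.
- at_depth 1%N ltac:(idtac; pull_out 3%N). regroup.
  at_depth 2%N ltac:(idtac; pull_out 3%N). at_depth 1%N ltac:(idtac; regroup).
  dsum7_congr; rewrite /phi2_after_x0 /obj_after; match_term.
Qed.

Lemma rho_bracket_expand : rhot d1 (d2 + dpsi) phi1 (gbracket d2 dpsi phi2 psi) F (x0 :: y) =
  dsum7 psi_in_phi2 y - dsum7 phi2_in_psi y.
Proof.
rewrite rhot_dsum.
rewrite_deep (F_ins_gbr hF d2 dpsi phi2 psi h1).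
rewrite_deep sgnzD. rewrite_deep sgnzN.
rewrite_deep dsumD. rewrite_deep dsumN.
rewrite_deep sgnz_dsum. rewrite_deep sgnz_sgnz.
congr (_ - _).
- at_depth 3%N ltac:(idtac; regroup). at_depth 4%N ltac:(idtac; regroup).
  dsum7_congr; rewrite /psi_in_phi2 /obj_after; match_term.
- at_depth 3%N ltac:(idtac; regroup). at_depth 4%N ltac:(idtac; regroup).
  dsum7_congr; rewrite /phi2_in_psi /obj_after; match_term.
Qed.

Lemma rho_L1_expand : sgnz (d1 * d2) (rhot d1 dpsi phi1 psi (L1t d2 phi2 F) (x0 :: y)) = dsum7 phi2_outside y.
Proof.
rewrite rhot_dsum sgnz_dsum.
rewrite_deep L1t_dsum.
rewrite_deep sgnz_dsum.
rewrite_deep sgnz_sgnz.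
at_depth 1%N ltac:(idtac; at_depth 1%N ltac:(idtac; pull_out 2%N); regroup).
at_depth 2%N ltac:(idtac; at_depth 1%N ltac:(idtac; pull_out 2%N); regroup).
dsum7_congr; rewrite /phi2_outside /obj_after; match_term.
Qed.

Lemma L1_rho_expand : sgnz (d1 * d2 + d2 * (d1 + dpsi)) (L1t d2 phi2 (rhot d1 dpsi phi1 psi F) (x0 :: y))
  = dsum7 psi_then_phi2 y + dsum7 phi2_in_psi y + dsum7 phi2_then_psi y + dsum7 phi2_outside y + dsum7 phi2_after_x0 y.
Proof.
rewrite L1t_dsum sgnz_dsum.
rewrite_deep rhot_dsum.
rewrite_deep dsum_cat_entry.
do 3 (rewrite_deep sgnzD; rewrite_deep sgnz_dsum; rewrite_deep dsumD).
rewrite_deep sgnz_sgnz.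
congr (_ + _ + _ + _ + _).
- at_depth 1%N ltac:(idtac; pull_out 1%N). regroup.
  at_depth 2%N ltac:(idtac; pull_out 1%N). at_depth 1%N ltac:(idtac; regroup).
  at_depth 3%N ltac:(idtac; pull_out 1%N). at_depth 2%N ltac:(idtac; regroup).
  at_depth 4%N ltac:(idtac; pull_out 1%N). at_depth 3%N ltac:(idtac; regroup).
  dsum7_congr; rewrite /psi_then_phi2 /obj_after; match_term.
- at_depth 1%N ltac:(idtac; pull_out 1%N). regroup.
  at_depth 2%N ltac:(idtac; pull_out 1%N). at_depth 1%N ltac:(idtac; regroup).
  at_depth 3%N ltac:(idtac; pull_out 1%N). at_depth 2%N ltac:(idtac; regroup).
  dsum7_congr; rewrite /phi2_in_psi /obj_after; match_term.
- at_depth 1%N ltac:(idtac; pull_out 1%N). regroup.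
  at_depth 2%N ltac:(idtac; pull_out 1%N). at_depth 1%N ltac:(idtac; regroup).
  dsum7_congr; rewrite /phi2_then_psi /obj_after; match_term.
- at_depth 1%N ltac:(idtac; pull_out 1%N). regroup.
  dsum7_congr; rewrite /phi2_outside /obj_after; match_term.
- dsum7_congr; rewrite /phi2_after_x0 /obj_after; match_term.
Qed.

Lemma L0_rho_expand : sgnz (d1 * d2 + d2 * (d1 + dpsi)) (L0t d2 phi2 (rhot d1 dpsi phi1 psi F) (x0 :: y))
  = dsum7 phi2_wrap_after_psi y.
Proof.
rewrite L0t_dsum sgnz_dsum.
rewrite_deep rhot_dsum.
rewrite_deep sgnz_dsum.
rewrite_deep sgnz_sgnz.
at_depth 1%N ltac:(idtac; regroup). at_depth 2%N ltac:(idtac; regroup).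
at_depth 3%N ltac:(idtac; regroup). at_depth 4%N ltac:(idtac; regroup).
dsum7_congr; rewrite /phi2_wrap_after_psi /obj_after; match_term.
Qed.

Lemma rho_L0_expand : rhot d2 dpsi phi2 psi (L0t d1 phi1 F) (x0 :: y) = dsum7 psi_in_phi2_wrap y.
Proof.
rewrite rhot_dsum.
rewrite_deep L0t_dsum.
rewrite_deep sgnz_dsum.
rewrite_deep sgnz_sgnz.
at_depth 1%N ltac:(idtac; at_depth 1%N ltac:(idtac; pull_out 2%N); regroup).
at_depth 2%N ltac:(idtac; at_depth 1%N ltac:(idtac; pull_out 2%N); regroup).
dsum7_congr.
rewrite /psi_in_phi2_wrap /obj_after; match_term.
Qed.

Lemma cancel_terms (V : zmodType) (g1 g2 g3 g4 g5 g6 g7 g8 t6 : V) :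
  g1 + (g4 + g5) + (g2 + g6 + g3) - (g4 - g7) + (g8 + t6 - (g2 + g7 + g1 + g8 + g3 + g6)) = g5 + t6.
Proof.
rewrite !opprD !opprK !addrA.
rewrite (ACl ((1*13)*(2*7)*(4*11)*(8*12)*(9*14)*(6*15)*(5*16)*(3*10)))%AC /=.
by rewrite !subrr !add0r.
Qed.

Lemma identity_on_chain :
  rhot (d1 + d2) dpsi (gcomp d1 d2 phi1 phi2) psi F (x0 :: y)
  - rhot d1 (d2 + dpsi) phi1 (gbracket d2 dpsi phi2 psi) F (x0 :: y)
  + sgnz (d1 * d2) (commLrhot d2 d1 dpsi phi2 phi1 psi F (x0 :: y))
  = Tt d1 d2 dpsi phi1 phi2 psi F (x0 :: y)
    + sgnz (d1 * d2) (Tt d2 d1 dpsi phi2 phi1 psi F (x0 :: y)).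
Proof.
rewrite /commLrhot /Tt /Lt rhot_addF.
rewrite !sgnzD sgnzN sgnzD !sgnz_sgnz.
rewrite rho_comp_expand rho_bracket_expand rho_L1_expand L1_rho_expand L0_rho_expand rho_L0_expand.
exact: cancel_terms.
Qed.
End Main.

Theorem mainTheorem14 (R : comNzRingType) (Ob : Type)
  (H : Ob -> Ob -> int -> lmodType R)
  (d1 d2 dpsi : int) (phi1 phi2 psi : cochain H)
  (h1 : is_cochain d1 phi1) (h2 : is_cochain d2 phi2) (hpsi : is_cochain dpsi psi)
  (W : lmodType R) (F : seq (entry H) -> W) (hF : multilinear F)
  (xs : seq (entry H)) (hxs : cyclic_chain xs) :
  rhot (d1 + d2) dpsi (gcomp d1 d2 phi1 phi2) psi F xs
  - rhot d1 (d2 + dpsi) phi1 (gbracket d2 dpsi phi2 psi) F xs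
  + sgnz (d1 * d2) (commLrhot d2 d1 dpsi phi2 phi1 psi F xs)
  = Tt d1 d2 dpsi phi1 phi2 psi F xs
    + sgnz (d1 * d2) (Tt d2 d1 dpsi phi2 phi1 psi F xs).
Proof.
case: xs hxs => [//|x0 y] _.
exact: (identity_on_chain d2 dpsi phi2 psi h1 hF x0 y).
Qed.
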